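(* Let $n\ge1$, let $f:\{0,1\}^n\to\{0,1\}^n$ be a Boolean model, let $J$ be a nonempty subset of $\{1,\dots,n\}$, and let $h$ be a refinement of $f$ on $X=\prod_{j=1}^n\{0,1,\dots,m_j\}$, where $m_j\ge1$ are integers with $m_j>1$ if and only if $j\in J$. Let $x,y\in X$ and suppose there is a trajectory from $x$ to $y$ in the asynchronous state transition graph of $h$. Then for every element $\hat x\in X_{^Jm.p.}$ compatible with $x$ there exists a trajectory $\hat x\to\cdots\to\hat y$ in the state transition graph of the partial $^J$m.p. dynamics of $f$ such that $\hat y$ is compatible with $y$.
   Context: Asynchronous dynamics of $h:X\to X$ (with $h_j(x)-x_j\in\{-1,0,1\}$): transition $x\to y$ if there is $i_0$ with $x_{i_0}\ne h_{i_0}(x)$, $y_{i_0}=x_{i_0}+\mathrm{sign}(h_{i_0}(x)-x_{i_0})$, $y_j=x_j$ for $j\neq i_0$; a trajectory is a finite sequence of consecutive transitions. For $x\in X$, $\alpha(x)=\{x'\in\{0,1\}^n:\forall j,(x_j=0\Rightarrow x'_j=0),(x_j=m_j\Rightarrow x'_j=1)\}$. A multivalued model $h:X\to X$ (with $h_j(x)-x_j\in\{-1,0,1\}$) is a refinement of $f$ if for all $x\in X$ and $j$: $h_j(x)<x_j\Rightarrow\exists x'\in\alpha(x), f_j(x')<x'_j$, and $h_j(x)>x_j\Rightarrow\exists x'\in\alpha(x), f_j(x')>x'_j$. Partial most permissive scheme: $X_{^Jm.p.}=\prod_{j=1}^n\mathcal A_j$ with $\mathcal A_j=\{0,1,i,d\}$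 if $j\in J$ and $\mathcal A_j=\{0,1\}$ otherwise ($i,d$ are formal symbols). For $x\in X_{^Jm.p.}$, $\gamma(x)=\{x'\in\{0,1\}^n:\forall j,(x_j=0\Rightarrow x'_j=0),(x_j=1\Rightarrow x'_j=1)\}$. There is a transition $x\to y$ in $X_{^Jm.p.}$ if there is $j_0$ with $y_j=x_j$ for $j\neq j_0$ and one of: (a) $x_{j_0}\in\{0,d\}$, $\exists x'\in\gamma(x)$ with $f_{j_0}(x')=1$, and $y_{j_0}=i$; (b) $x_{j_0}\in\{1,i\}$, $\exists x'\in\gamma(x)$ with $f_{j_0}(x')=0$, and $y_{j_0}=d$; (c) $x_{j_0}=i$ and $y_{j_0}=1$; (d) $x_{j_0}=d$ and $y_{j_0}=0$; (e) $j_0\notin J$, $x_{j_0}=0$, $\exists x'\in\gamma(x)$ with $f_{j_0}(x')=1$, and $y_{j_0}=1$; (f) $j_0\notin J$, $x_{j_0}=1$, $\exists x'\in\gamma(x)$ with $f_{j_0}(x')=0$, and $y_{j_0}=0$. An element $\hat x\in X_{^Jm.p.}$ is compatible with $x\in X$ if for every $j$: $x_j=0\Rightarrow\hat x_j=0$; $x_j=m_j\Rightarrow\hat x_j=1$; and $x_j\notin\{0,m_j\}\Rightarrow\hat x_j\in\{i,d\}$. *)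

From Stdlib Require Import Relations.
From mathcomp Require Import all_boot.
Set Implicit Arguments. Unset Strict Implicit. Unset Printing Implicit Defensive.

(* Components are indexed by 'I_n (paper: 1..n).  Boolean states: {ffun 'I_n -> bool};
   multivalued states: {ffun 'I_n -> nat} restricted to X = prod_j {0,..,m_j}. *)
Definition bstate n := {ffun 'I_n -> bool}.
Definition mstate n := {ffun 'I_n -> nat}.

Definition inX n (m : 'I_n -> nat) (x : mstate n) : Prop := forall j, x j <= m j.

Definition alpha n (m : 'I_n -> nat) (x : mstate n) (x' : bstate n) : Prop :=
  forall j, (x j = 0 -> x' j = false) /\ (x j = m j -> x' j = true).

(* h is a refinement of f (for all x in X); bool coerced to nat (false=0, true=1). *)
Definition refinement n (m : 'I_n -> nat) (f : bstate n -> bstate n)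
  (h : mstate n -> mstate n) : Prop :=
  forall x, inX m x -> forall j,
    (h x j < x j -> exists2 x', alpha m x x' & (f x' j < x' j)%N) /\
    (h x j > x j -> exists2 x', alpha m x x' & (f x' j > x' j)%N).

Definition multivalued_model n (m : 'I_n -> nat) (h : mstate n -> mstate n) : Prop :=
  forall x, inX m x -> inX m (h x) /\ forall j, h x j <= (x j).+1 /\ x j <= (h x j).+1.

Definition async_step n (m : 'I_n -> nat) (h : mstate n -> mstate n) (x y : mstate n) : Prop :=
  inX m x /\ inX m y /\
  exists i0, x i0 != h x i0 /\
    y i0 = (if h x i0 < x i0 then (x i0).-1 else (x i0).+1) /\
    forall j, j != i0 -> y j = x j.

Inductive mpval := M0 | M1 | Mi | Md.
Definition mpstate n := {ffun 'I_n -> mpval}.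

Definition inXmp n (J : {set 'I_n}) (x : mpstate n) : Prop :=
  forall j, j \notin J -> x j = M0 \/ x j = M1.

Definition gamma n (x : mpstate n) (x' : bstate n) : Prop :=
  forall j, (x j = M0 -> x' j = false) /\ (x j = M1 -> x' j = true).

Definition mp_step n (J : {set 'I_n}) (f : bstate n -> bstate n) (x y : mpstate n) : Prop :=
  inXmp J x /\ inXmp J y /\
  exists j0, (forall j, j != j0 -> y j = x j) /\
   (((x j0 = M0 \/ x j0 = Md) /\ (exists2 x', gamma x x' & f x' j0 = true) /\ y j0 = Mi) \/
       ((x j0 = M1 \/ x j0 = Mi) /\ (exists2 x', gamma x x' & f x' j0 = false) /\ y j0 = Md) \/
       (x j0 = Mi /\ y j0 = M1) \/
       (x j0 = Md /\ y j0 = M0) \/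
       (j0 \notin J /\ x j0 = M0 /\ (exists2 x', gamma x x' & f x' j0 = true) /\ y j0 = M1) \/
     (j0 \notin J /\ x j0 = M1 /\ (exists2 x', gamma x x' & f x' j0 = false) /\ y j0 = M0)).

Definition compatible n (m : 'I_n -> nat) (x : mstate n) (xh : mpstate n) : Prop :=
  forall j, (x j = 0 -> xh j = M0) /\ (x j = m j -> xh j = M1) /\
            (x j <> 0 -> x j <> m j -> xh j = Mi \/ xh j = Md).

Definition async_traj n m h := clos_refl_trans (mstate n) (@async_step n m h).
Definition mp_traj n J f := clos_refl_trans (mpstate n) (@mp_step n J f).

(* An asynchronous step of h moves one component i by one unit, and the refinement
   property provides a Boolean state x' in alpha(x) at which f_i points in the same
   direction.  Compatibility of the most permissive state with x puts x' in its
   gamma-set, so x' witnesses the most permissive transitions of component i towards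
   the transient value (i or d) and then, if the new level is an extreme one, on to
   the corresponding stable value (1 or 0).  Chaining these simulations along the
   trajectory of h gives the theorem. *)

From Stdlib Require Import Relations.
From mathcomp Require Import all_boot.
From mathcomp Require Import zify.
Set Implicit Arguments. Unset Strict Implicit. Unset Printing Implicit Defensive.

Definition mp_upd n (xh : mpstate n) (i : 'I_n) (v : mpval) : mpstate n :=
  [ffun j => if j == i then v else xh j].

Lemma mp_upd_same n (xh : mpstate n) i v : mp_upd xh i v i = v.
Proof. by rewrite ffunE eqxx. Qed.

Lemma mp_upd_other n (xh : mpstate n) i v j : j != i -> mp_upd xh i v j = xh j.
Proof. by move=> ne_ji; rewrite ffunE (negbTE ne_ji). Qed.

Lemma mp_upd_id n (xh : mpstate n) i : mp_upd xh i (xh i) = xh.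
Proof. by apply/ffunP=> j; rewrite ffunE; case: eqP => [->|]. Qed.

Lemma mp_upd_upd n (xh : mpstate n) i v w : mp_upd (mp_upd xh i v) i w = mp_upd xh i w.
Proof. by apply/ffunP=> j; rewrite !ffunE; case: eqP. Qed.

Lemma inXmp_upd n (J : {set 'I_n}) (xh : mpstate n) i v :
  inXmp J xh -> i \in J \/ v = M0 \/ v = M1 -> inXmp J (mp_upd xh i v).
Proof.
move=> Hxh Hv j jNJ; rewrite ffunE; case: eqP => [ji|_]; last exact: Hxh.
by case: Hv => // iJ; rewrite ji iJ in jNJ.
Qed.

(* [b] is the direction of motion: [true] upwards, [false] downwards. *)
Definition mp_end (b : bool) : mpval := if b then M1 else M0.
Definition mp_moving (b : bool) : mpval := if b then Mi else Md.
Definition level_end (b : bool) (mj : nat) : nat := if b then mj else 0.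

Definition compat_at (mj k : nat) (v : mpval) : Prop :=
  (k = 0 -> v = M0) /\ (k = mj -> v = M1) /\ (k <> 0 -> k <> mj -> v = Mi \/ v = Md).

Lemma compat_at_end b mj : 0 < mj -> compat_at mj (level_end b mj) (mp_end b).
Proof. by case: b => /= mj_gt0; do !split=> *; lia. Qed.

Lemma compat_at_moving b mj k :
  k <> level_end b mj -> k <> level_end (~~ b) mj -> compat_at mj k (mp_moving b).
Proof. by case: b => /= Hk Hk'; do !split=> *; by [left|right|lia]. Qed.

Lemma compatible_upd n (m : 'I_n -> nat) (x y : mstate n) (xh : mpstate n) i v :
  compatible m x xh -> (forall j, j != i -> y j = x j) -> compat_at (m i) (y i) v ->
  compatible m y (mp_upd xh i v).
Proof.
move=> Cx Hy Hv j; have [->|ne_ji] := eqVneq j i; first by rewrite mp_upd_same.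
by rewrite mp_upd_other // Hy.
Qed.

Lemma compatible_gamma n (m : 'I_n -> nat) (x : mstate n) (xh : mpstate n) x' :
  compatible m x xh -> alpha m x x' -> gamma xh x'.
Proof.
move=> Cx Ax j; have [C0 [Cm Cmid]] := Cx j; have [A0 Am] := Ax j.
have [x0|x0] := eqVneq (x j) 0; first by rewrite (C0 x0); split=> // _; apply: A0.
have [xm|xm] := eqVneq (x j) (m j); first by rewrite (Cm xm); split=> // _; apply: Am.
by case: (Cmid (elimN eqP x0) (elimN eqP xm)) => ->; split.
Qed.

Lemma gamma_not_end n (xh : mpstate n) x' i b :
  gamma xh x' -> x' i = ~~ b -> xh i <> mp_end b.
Proof.
move=> G; have [G0 G1] := G i.
by case: b => /= Hx' E; [rewrite G1 in Hx'|rewrite G0 in Hx'].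
Qed.

Section MostPermissive.

Variables (n : nat) (J : {set 'I_n}) (f : bstate n -> bstate n).

Lemma mp_traj_inXmp xh yh : mp_traj J f xh yh -> inXmp J xh -> inXmp J yh.
Proof. by elim=> [? ? [_ [Hy _]] _ | // | ? ? ? _ IH1 _ IH2 /IH1 /IH2]. Qed.

Lemma mp_step_move b xh i x' :
  inXmp J xh -> i \in J -> xh i = mp_end (~~ b) \/ xh i = mp_moving (~~ b) ->
  gamma xh x' -> f x' i = b -> mp_step J f xh (mp_upd xh i (mp_moving b)).
Proof.
move=> Hxh iJ Hxi G Hf; split=> //; split; first by apply: inXmp_upd Hxh _; left.
exists i; split=> [j|]; first exact: mp_upd_other.
rewrite mp_upd_same; case: b Hxi Hf => /= Hxi Hf; [left|right; left];
  by split; [|split; [exists x'|]].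
Qed.

Lemma mp_step_settle b xh i :
  inXmp J xh -> xh i = mp_moving b -> mp_step J f xh (mp_upd xh i (mp_end b)).
Proof.
move=> Hxh Hxi; split=> //; split;
  first by apply: inXmp_upd Hxh _; right; rewrite /mp_end; case: (b); auto.
exists i; split=> [j|]; first exact: mp_upd_other.
by rewrite mp_upd_same; case: b Hxi => /= Hxi; [do 2 right; left|do 3 right; left].
Qed.

Lemma mp_step_flip b xh i x' :
  inXmp J xh -> i \notin J -> xh i = mp_end (~~ b) ->
  gamma xh x' -> f x' i = b -> mp_step J f xh (mp_upd xh i (mp_end b)).
Proof.
move=> Hxh iNJ Hxi G Hf; split=> //; split;
  first by apply: inXmp_upd Hxh _; right; rewrite /mp_end; case: (b); auto.
exists i; split=> [j|]; first exact: mp_upd_other.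
rewrite mp_upd_same; case: b Hxi Hf => /= Hxi Hf; [do 4 right; left|do 5 right];
  by do 3 (split=> //); exists x'.
Qed.

Lemma mp_traj_to_moving b xh i x' :
  inXmp J xh -> i \in J -> xh i <> mp_end b -> gamma xh x' -> f x' i = b ->
  mp_traj J f xh (mp_upd xh i (mp_moving b)).
Proof.
move=> Hxh iJ Hend G Hf.
have [Hmov|Hsrc] : xh i = mp_moving b \/
    (xh i = mp_end (~~ b) \/ xh i = mp_moving (~~ b)).
  by move: Hend; case: (b); case: (xh i) => //= _; auto.
- by rewrite -Hmov mp_upd_id; apply: rt_refl.
- by apply: rt_step; apply: (mp_step_move Hxh iJ Hsrc G Hf).
Qed.

Lemma mp_traj_to_end b xh i x' :
  inXmp J xh -> xh i <> mp_end b -> gamma xh x' -> f x' i = b ->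
  mp_traj J f xh (mp_upd xh i (mp_end b)).
Proof.
move=> Hxh Hend G Hf; case: (boolP (i \in J)) => [iJ|iNJ].
  have Tmov := mp_traj_to_moving Hxh iJ Hend G Hf.
  have Hmov := mp_traj_inXmp Tmov Hxh.
  apply: rt_trans Tmov _; rewrite -(mp_upd_upd xh i (mp_moving b) (mp_end b)).
  by apply: rt_step; apply: mp_step_settle Hmov (mp_upd_same _ _ _).
have Hopp : xh i = mp_end (~~ b).
  by case: (Hxh i iNJ) Hend => ->; case: (b) => //= /(_ erefl).
by apply: rt_step; apply: (mp_step_flip Hxh iNJ Hopp G Hf).
Qed.

End MostPermissive.

Section Simulation.

Variables (n : nat) (f : bstate n -> bstate n) (J : {set 'I_n}).
Variables (m : 'I_n -> nat) (h : mstate n -> mstate n).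
Hypothesis m_gt0 : forall j, 1 <= m j.
Hypothesis m_gt1 : forall j, 1 < m j <-> j \in J.
Hypothesis h_refines : refinement m f h.

Lemma refinement_witness x i : inX m x -> x i != h x i ->
  exists2 x', alpha m x x' & f x' i = (x i < h x i) /\ x' i = ~~ (x i < h x i).
Proof.
move=> Hx Hne; have [Rdown Rup] := h_refines Hx i.
case: ltngtP Hne => // Hlt _; [have [x' Ax Fx] := Rup Hlt|have [x' Ax Fx] := Rdown Hlt];
  by exists x' => //; move: Fx; case: (f x' i); case: (x' i).
Qed.

Lemma async_step_simulation x y xh :
  async_step m h x y -> inXmp J xh -> compatible m x xh ->
  exists2 yh, mp_traj J f xh yh & compatible m y yh.
Proof.
move=> [Hx [Hy [i [Hne [Hyi Hyj]]]]] Hxh Cx.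
have [x' Ax [Hf Hx']] := refinement_witness Hx Hne.
have G := compatible_gamma Cx Ax.
have Hend := gamma_not_end G Hx'.
have Hopp : y i <> level_end (~~ (x i < h x i)) (m i).
  by move: Hyi (Hx i) (Hy i); rewrite /level_end; case: ltngtP Hne => //= *; lia.
have [Ey|Ey] := eqVneq (y i) (level_end (x i < h x i) (m i)).
  exists (mp_upd xh i (mp_end (x i < h x i))); first exact: mp_traj_to_end Hxh Hend G Hf.
  by apply: compatible_upd Cx Hyj _; rewrite Ey; apply: compat_at_end.
have iJ : i \in J.
  by apply/m_gt1; move: Ey Hopp (Hy i); case: (x i < h x i) => /=; lia.
exists (mp_upd xh i (mp_moving (x i < h x i))); first exact: mp_traj_to_moving Hxh iJ Hend G Hf.
by apply: compatible_upd Cx Hyj _; apply: compat_at_moving => //; apply/eqP.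
Qed.

Lemma async_traj_simulation x y : async_traj m h x y ->
  forall xh, inXmp J xh -> compatible m x xh ->
  exists2 yh, mp_traj J f xh yh & compatible m y yh.
Proof.
elim=> {x y} [x y Hstep|x|x y z _ IH1 _ IH2] xh Hxh Cx.
- exact: async_step_simulation Hstep Hxh Cx.
- by exists xh; first apply: rt_refl.
- have [yh T1 Cy] := IH1 xh Hxh Cx.
  have [zh T2 Cz] := IH2 yh (mp_traj_inXmp T1 Hxh) Cy.
  by exists zh; first exact: rt_trans T1 T2.
Qed.

End Simulation.

Theorem theorem2 (n : nat) (f : bstate n -> bstate n) (J : {set 'I_n})
  (m : 'I_n -> nat) (h : mstate n -> mstate n) (x y : mstate n) :
  0 < n ->
  J != set0 ->
  (forall j, 1 <= m j) ->
  (forall j, 1 < m j <-> j \in J) ->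
  multivalued_model m h ->
  refinement m f h ->
  inX m x ->
  async_traj m h x y ->
  forall xh : mpstate n, inXmp J xh -> compatible m x xh ->
    exists2 yh : mpstate n, mp_traj J f xh yh & compatible m y yh.
Proof.
move=> _ _ m_gt0 m_gt1 _ h_refines _.
exact: (async_traj_simulation m_gt0 m_gt1 h_refines).
Qed.
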